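(* Let $H$ be a finite-dimensional Hilbert space, let $C_1\subseteq H$ be a nonempty compact set and $C_2\subseteq H$ a nonempty closed set. For $i=1,2$, let $P_{C_i}:H\to C_i$ be a map such that $P_{C_i}(z)$ is a nearest point of $C_i$ to $z$ for every $z\in H$, and assume that $P_{C_2}$ is continuous. Let $x_0\in C_1$ and define sequences by $y_i=P_{C_2}(x_i)$ and $x_{i+1}=P_{C_1}(y_i)$ for $i=0,1,2,\ldots$. Then there exist $x\in C_1$ and $y=P_{C_2}(x)\in C_2$ such that $\|x-y\|=\lim_{i\to\infty}\|x_i-y_i\|$. *)

From HB Require Import structures.
From mathcomp Require Import all_boot all_order all_algebra.
From mathcomp Require Import all_classical all_reals all_analysis.
Set Implicit Arguments. Unset Strict Implicit. Unset Printing Implicit Defensive.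
Import Order.TTheory GRing.Theory Num.Theory.
Import numFieldNormedType.Exports.
Local Open Scope ring_scope.
Local Open Scope classical_set_scope.

(* A finite-dimensional real Hilbert space is modeled as R^n = 'rV[R]_n with
   the Euclidean norm. The topology on 'rV[R]_n (product topology) coincides
   with the Euclidean-norm topology. *)
Definition enorm (R : realType) (n : nat) (v : 'rV[R]_n) : R :=
  Num.sqrt (\sum_(i < n) (v ord0 i) ^+ 2).

Definition nearest_point_map (R : realType) (n : nat)
  (C : set 'rV[R]_n) (P : 'rV[R]_n -> 'rV[R]_n) : Prop :=
  forall z, C (P z) /\ (forall c, C c -> enorm (z - P z) <= enorm (z - c)).

From HB Require Import structures.
From mathcomp Require Import all_boot all_order all_algebra.
From mathcomp Require Import all_classical all_reals all_analysis.
Import Order.TTheory GRing.Theory Num.Theory.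
Import numFieldNormedType.Exports.
Local Open Scope ring_scope.
Local Open Scope classical_set_scope.

(* Each half-step of the iteration can only shorten the gap,
   |x_(i+1) - y_(i+1)| <= |x_(i+1) - y_i| <= |x_i - y_i|, so the distances
   decrease to a limit L.  By compactness the x_i have a cluster point x in C1,
   and z |-> |z - P_C2 z| is continuous, so its value at x is L. *)

Lemma continuous_cluster_cvg_eq {T U : topologicalType}
    {F : set_system T} {f : T -> U} {x : T} {l : U} :
  hausdorff_space U -> Filter F -> {for x, continuous f} ->
  cluster F x -> f @ F --> l -> f x = l.
Proof.
move=> hU FF fx; rewrite (cluster_cvgE FF) => -[G PG [Gx FG]] fFl.
have fGl : f @ G --> l by apply: cvg_trans fFl; apply: cvg_app.
exact: (cvg_unique hU (cvg_comp _ _ Gx fx) fGl).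
Qed.

Lemma compact_seq_cluster {T : topologicalType} {A : set T} {u : nat -> T} :
  compact A -> (forall i, A (u i)) -> exists2 x, A x & cluster (u @ \oo) x.
Proof.
move=> cA Au.
have [|x [Ax clx]] := cA (u @ \oo) (fmap_proper_filter u eventually_filter).
  by exists 0%N => // i _; exact: Au.
by exists x.
Qed.

Section EuclideanNorm.
Context {R : realType} {n : nat}.
Implicit Types u v : 'rV[R]_n.

Lemma enorm_ge0 v : 0 <= enorm v.
Proof. exact: sqrtr_ge0. Qed.

Lemma enormBC u v : enorm (u - v) = enorm (v - u).
Proof.
rewrite /enorm; congr Num.sqrt; apply: eq_bigr => i _.
by rewrite -opprB mxE sqrrN.
Qed.

Lemma enorm_continuous : continuous (@enorm R n).
Proof.
move=> v; apply: continuous_comp; last exact: sqrt_continuous.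
apply: (cvg_big (F := nbhs v) (@add_continuous R^o)) => i _.
exact: (continuous_comp (@coord_continuous R 1 n ord0 i v) (@exprn_continuous R 2 _)).
Qed.

Lemma dist_to_continuous {P : 'rV[R]_n -> 'rV[R]_n} :
  continuous P -> continuous (fun z : 'rV[R]_n => enorm (z - P z)).
Proof.
move=> Pc z.
have BPc : (fun z => z - P z) @ z --> z - P z by exact: cvgB cvg_id (Pc z).
exact: (continuous_comp BPc (enorm_continuous _)).
Qed.

End EuclideanNorm.

Section AlternatingProjections.
Context {R : realType} {n : nat} {C1 C2 : set 'rV[R]_n}.
Context {P1 P2 : 'rV[R]_n -> 'rV[R]_n} {xs ys : nat -> 'rV[R]_n}.
Hypotheses (hP1 : nearest_point_map C1 P1) (hP2 : nearest_point_map C2 P2).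
Hypotheses (hys : forall i, ys i = P2 (xs i)) (hxs : forall i, xs i.+1 = P1 (ys i)).
Hypothesis C1xs0 : C1 (xs 0%N).

Lemma alternating_proj_in1 i : C1 (xs i).
Proof. by case: i => [|i] //; rewrite hxs; case: (hP1 (ys i)). Qed.

Lemma alternating_proj_dist_nonincreasing :
  nonincreasing_seq (fun i => enorm (xs i - ys i)).
Proof.
apply/nonincreasing_seqP => i.
have C2ys : C2 (ys i) by rewrite hys; case: (hP2 (xs i)).
rewrite [ys i.+1]hys; apply: le_trans ((hP2 (xs i.+1)).2 _ C2ys) _.
rewrite enormBC [leRHS]enormBC hxs.
exact: (hP1 (ys i)).2 _ (alternating_proj_in1 i).
Qed.

Lemma alternating_proj_dist_cvg : cvgn (fun i => enorm (xs i - ys i)).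
Proof.
apply: nonincreasing_is_cvgn; first exact: alternating_proj_dist_nonincreasing.
by exists 0 => _ [i _ <-]; exact: enorm_ge0.
Qed.

End AlternatingProjections.

Theorem mainTheorem6 (R : realType) (n : nat)
  (C1 C2 : set 'rV[R]_n)
  (hC1ne : C1 !=set0) (hC1 : compact C1)
  (hC2ne : C2 !=set0) (hC2 : closed C2)
  (P1 P2 : 'rV[R]_n -> 'rV[R]_n)
  (hP1 : nearest_point_map C1 P1) (hP2 : nearest_point_map C2 P2)
  (hP2c : continuous P2)
  (x0 : 'rV[R]_n) (hx0 : C1 x0)
  (xs ys : nat -> 'rV[R]_n)
  (hxs0 : xs 0%N = x0)
  (hys : forall i, ys i = P2 (xs i))
  (hxs : forall i, xs i.+1 = P1 (ys i)) :
  exists x y, C1 x /\ y = P2 x /\ C2 y /\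
    (fun i => enorm (xs i - ys i)) @ \oo --> enorm (x - y).
Proof.
have C1xs0 : C1 (xs 0%N) by rewrite hxs0.
have [x C1x clx] := compact_seq_cluster hC1 (alternating_proj_in1 hP1 hxs C1xs0).
exists x, (P2 x); do 3!split => //; first by case: (hP2 x).
have dcvg := alternating_proj_dist_cvg hP1 hP2 hys hxs C1xs0.
have dist_xs : (fun i => enorm (xs i - P2 (xs i))) = (fun i => enorm (xs i - ys i)).
  by apply/funext => i; rewrite hys.
suff -> : enorm (x - P2 x) = limn (fun i => enorm (xs i - ys i)).
  exact: dcvg.
apply: (continuous_cluster_cvg_eq (@Rhausdorff R) _ (dist_to_continuous hP2c x) clx).
rewrite /= -fmap_comp /comp dist_xs.
exact: dcvg.
Qed.
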